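(* Let $2<p<\infty$ and let $\mathcal{U}$ be a nonprincipal ultrafilter on $\mathbb{N}$. Let $M=\{(f_n)_{n,\mathcal{U}}\in(L^{p})^{\mathcal{U}}:\lim_{n,\mathcal{U}}\|f_n\|_2=0\}$. Then $R[(f_n)_{n,\mathcal{U}}]\in M$ for every $(f_n)_{n,\mathcal{U}}\in(L^{p})^{\mathcal{U}}$, and $R[(f_n)_{n,\mathcal{U}}]=(f_n)_{n,\mathcal{U}}$ for every $(f_n)_{n,\mathcal{U}}\in M$; hence $M$ is the range of $R$.
   Context: $L^{p}=L^{p}([0,1],\mu)$, $\mu$ Lebesgue measure ($L^p\subset L^2$ for $p>2$). $(L^{p})^{\mathcal{U}}$ is the ultrapower of $L^p$ and $(f_n)_{n,\mathcal{U}}$ the class of a bounded sequence. $R$ is the projection on $(L^{p})^{\mathcal{U}}$ given by $R[(f_n)_{n,\mathcal{U}}]=\lim_{r\to\infty}(f_nI(|f_n|>r))_{n,\mathcal{U}}$ (norm limit), with $I(|f|>r)$ the indicator of $\{|f|>r\}$. *)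

From HB Require Import structures.
From mathcomp Require Import all_boot all_order all_algebra.
From mathcomp Require Import all_classical all_reals all_analysis.
Set Implicit Arguments. Unset Strict Implicit. Unset Printing Implicit Defensive.
Import Order.TTheory GRing.Theory Num.Theory.
Import numFieldNormedType.Exports.
Local Open Scope classical_set_scope.
Local Open Scope ring_scope.

Section defs.
Context {R : realType}.

Definition mu01 :=
  mrestr (@lebesgue_measure R) (@measurable_itv R `[0%R, 1%R]).

Definition pnorm (p : R) (f : R -> R) : \bar R := 'N[mu01]_(p%:E) [EFin \o f].

Definition inLp (p : R) (f : R -> R) : Prop :=
  measurable_fun setT f /\ (pnorm p f < +oo)%E.

(* (F n)_n is a bounded sequence in L^p, i.e. a representative of an
   element (F n)_{n,U} of the ultrapower (L^p)^U. *)
Definition Lp_bdd_seq (p : R) (F : nat -> R -> R) : Prop :=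
  (forall n, inLp p (F n)) /\ exists C : R, forall n, (pnorm p (F n) <= C%:E)%E.

Definition ulim_is (U : set_system nat) (u : nat -> R) (l : R) : Prop :=
  forall e : R, 0 < e -> U [set n | `|u n - l| < e].

Definition cut_above (r : R) (f : R -> R) : R -> R :=
  fun x => f x * \1_[set y | r < `|f y|] x.

(* R[(F n)_{n,U}] = (G n)_{n,U}: the classes (cut_above r (F n))_{n,U}
   converge in the ultrapower norm, as r -> +oo, to (G n)_{n,U};
   the ultrapower norm of a class (H n)_{n,U} is lim_{n,U} ||H n||_p. *)
Definition Rproj_is (p : R) (U : set_system nat) (F G : nat -> R -> R) : Prop :=
  exists L : R -> R,
    (forall r, ulim_is U (fun n => fine (pnorm p (cut_above r (F n) \- G n))) (L r))
    /\ L r @[r --> +oo] --> 0.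

Definition inM (U : set_system nat) (F : nat -> R -> R) : Prop :=
  ulim_is U (fun n => fine (pnorm 2 (F n))) 0.

End defs.

From HB Require Import structures.
From mathcomp Require Import all_boot all_order all_algebra.
From mathcomp Require Import all_classical all_reals all_analysis.
From mathcomp Require Import ring lra measurable_realfun.
Import Order.TTheory GRing.Theory Num.Theory.
Import numFieldNormedType.Exports.
Local Open Scope classical_set_scope.
Local Open Scope ring_scope.

(* Write b_n(r) = int |f_n|^p 1{|f_n| > r}.  For r <= s the truncations
   f 1{|f| > r} - f 1{|f| > s} and f 1{|f| > s} have disjoint supports, so the
   p-th power of the distance between the truncations of f_n at levels r and s
   is b_n(r) - b_n(s).  The ultralimits a(r) of b_n(r) decrease to some a_oo,
   and a diagonal choice of levels s_n -> oo along U with b_n(s_n) -> a_oo gives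
   G_n = f_n 1{|f_n| > s_n}: the truncations at level r are at distance
   (a(r) - a_oo)^(1/p) -> 0 from G, while ||G_n||_2^2 <= s_n^(2-p) ||f_n||_p^p
   tends to 0, so G lies in M.  Conversely, if ||f_n||_2 -> 0, the discarded
   part f_n 1{|f_n| <= r} has p-th power norm at most max(r,1)^(p-2) ||f_n||_2^2,
   so every truncation of f is already U-close to f. *)

Lemma diagonal_index (A : nat -> set nat) :
  (forall k n, A k n -> (k <= n)%N) ->
  exists kn : nat -> nat, forall K n, A K n -> (K <= kn n)%N /\ A (kn n) n.
Proof.
move=> A_le; pose P n k := (k == 0)%N || `[< A k n >].
have exP n : exists k, P n k by exists 0%N.
have P_le n k : P n k -> (k <= n)%N by case/orP => [/eqP -> //|/asboolP/A_le].
exists (fun n => ex_maxn (exP n) (P_le n)) => K n AK.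
case: ex_maxnP => k Pk max_k.
have Kk : (K <= k)%N by apply: max_k; apply/orP; right; exact/asboolP.
split=> //; case/orP: Pk => [/eqP k0|/asboolP //].
by move: Kk AK; rewrite k0 leqn0 => /eqP ->.
Qed.

Lemma exists_nat_gt {R : archiRealDomainType} (x : R) : exists K : nat, x < K%:R.
Proof. by exists (Num.Def.truncn x).+1; exact: truncnS_gt. Qed.

Section powR_subadditive.
Context {R : realType}.
Implicit Types a b x y q : R.

Lemma powRD_le a b q : 0 <= a -> 0 <= b -> 0 < q <= 1 ->
  (a + b) `^ q <= a `^ q + b `^ q.
Proof.
move=> a0 b0 /andP[q0 q1]; have [ab0|ab_neq0] := eqVneq (a + b) 0.
  have [-> ->] : a = 0 /\ b = 0 by split; lra.
  by rewrite addr0 powR0 ?gt_eqF // addr0.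
have ab_gt0 : 0 < a + b by rewrite lt_neqAle eq_sym ab_neq0 addr_ge0.
have frac_le x : 0 <= x <= a + b -> (a + b) `^ q * (x / (a + b)) <= x `^ q.
  move=> /andP[x0 x_le]; have t0 : 0 <= x / (a + b) by rewrite divr_ge0 // ltW.
  rewrite -{2}(divfK ab_neq0 x) powRM ?(ltW ab_gt0) // [leLHS]mulrC.
  rewrite ler_wpM2r ?powR_ge0 //.
  have [->|t_neq0] := eqVneq (x / (a + b)) 0; first exact: powR_ge0.
  apply: ger1_powR => //; rewrite lt_neqAle eq_sym t_neq0 t0 /=.
  by rewrite ler_pdivrMr // mul1r.
apply: le_trans (lerD (frac_le a _) (frac_le b _)); last 2 first.
- by rewrite a0 lerDl.
- by rewrite b0 lerDr.
by rewrite -mulrDr -mulrDl divff ?mulr1.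
Qed.

Lemma powR_dist_le {x y q} : 0 <= x -> 0 <= y -> 0 < q <= 1 ->
  `|x `^ q - y `^ q| <= `|x - y| `^ q.
Proof.
wlog yx : x y / y <= x.
  move=> wlog_yx x0 y0 hq; have [yx|/ltW xy] := leP y x; first exact: wlog_yx.
  by rewrite distrC (distrC x); exact: wlog_yx.
move=> x0 y0 hq; have q0 : 0 <= q by case/andP: hq => /ltW.
rewrite !ger0_norm ?subr_ge0 ?ge0_ler_powR //.
by rewrite lerBlDr -{1}(subrK y x) powRD_le ?subr_ge0.
Qed.

Lemma powRVK {x q} : 0 <= x -> q != 0 -> (x `^ q^-1) `^ q = x.
Proof. by move=> x0 q0; rewrite -powRrM mulVf // powRr1. Qed.

End powR_subadditive.

Section ultralimit.
Context {R : realType} {U : set_system nat} (UU : UltraFilter U).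
Implicit Types (u v : nat -> R) (c l m q : R).

Lemma ultra_not_set0 : ~ U set0.
Proof. by move=> /filter_ex [x []]. Qed.

Lemma ulim_cst c : ulim_is U (fun=> c) c.
Proof. by move=> e e0; apply: filterS filterT => n _; rewrite subrr normr0. Qed.

Lemma eq_ulim {u v l} : u =1 v -> ulim_is U u l -> ulim_is U v l.
Proof. by move=> uv hu e e0; apply: filterS (hu e e0) => n /=; rewrite uv. Qed.

Lemma ler_ulim {u v l m} :
  (forall n, u n <= v n) -> ulim_is U u l -> ulim_is U v m -> l <= m.
Proof.
move=> uv hu hv; rewrite leNgt; apply/negP => ml.
have e0 : 0 < (l - m) / 2 by rewrite divr_gt0 // subr_gt0.
apply: ultra_not_set0; apply: filterS (filterI (hu _ e0) (hv _ e0)) => n /= [].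
rewrite !ltr_norml => /andP[h1 _] /andP[_ h2].
by have := uv n; lra.
Qed.

Lemma ulimB {u v l m} : ulim_is U u l -> ulim_is U v m ->
  ulim_is U (fun n => u n - v n) (l - m).
Proof.
move=> hu hv e e0; have e2 : 0 < e / 2 by rewrite divr_gt0.
apply: filterS (filterI (hu _ e2) (hv _ e2)) => n /= [].
by rewrite !ltr_norml => /andP[? ?] /andP[? ?]; apply/andP; split; lra.
Qed.

Lemma ulim_norm {u l} : ulim_is U u l -> ulim_is U (fun n => `|u n|) `|l|.
Proof.
move=> hu e e0; apply: filterS (hu e e0) => n /=.
exact: le_lt_trans (ler_dist_dist _ _).
Qed.

Lemma ulim0_le {u v} :
  (forall n, 0 <= u n <= v n) -> ulim_is U v 0 -> ulim_is U u 0.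
Proof.
move=> uv hv e e0; apply: filterS (hv e e0) => n /=.
have /andP[u0 uvn] := uv n; rewrite !subr0 (ger0_norm u0) => h.
exact: le_lt_trans uvn (le_lt_trans (ler_norm _) h).
Qed.

Lemma ulimZ {u l} c : ulim_is U u l -> ulim_is U (fun n => c * u n) (c * l).
Proof.
move=> hu e e0; have c1 : 0 < `|c| + 1 by rewrite ltr_pwDr.
apply: filterS (hu _ (divr_gt0 e0 c1)) => n /= h.
rewrite -mulrBr normrM (@le_lt_trans _ _ ((`|c| + 1) * `|u n - l|)) //.
  by rewrite ler_wpM2r // lerDl.
by rewrite mulrC -ltr_pdivlMr.
Qed.

Lemma ulim_powR {u l q} : (forall n, 0 <= u n) -> 0 <= l -> 0 < q <= 1 ->
  ulim_is U u l -> ulim_is U (fun n => u n `^ q) (l `^ q).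
Proof.
move=> u0 l0 hq hu e e0; have q0 : 0 < q by case/andP: hq.
apply: filterS (hu _ (powR_gt0 q^-1 e0)) => n /= h.
apply: le_lt_trans (powR_dist_le (u0 n) l0 hq) _.
rewrite -[X in _ < X](powRVK (ltW e0) (lt0r_neq0 q0)).
by rewrite gt0_ltr_powR ?nnegrE ?powR_ge0.
Qed.

(* The ultralimit is the supremum of the levels that are U-almost surely
   exceeded. *)
Lemma ulim_bounded {u m l} :
  (forall n, m <= u n <= l) -> exists x, ulim_is U u x.
Proof.
move=> mul; set S := [set x : R | U [set n | x <= u n]].
have Sm : S m by apply: filterS filterT => n _; case/andP: (mul n).
have S_le : ubound S l.
  move=> x Sx; rewrite leNgt; apply/negP => lx; apply: ultra_not_set0.
  apply: filterS Sx => n /= xu; have /andP[_ ul] := mul n.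
  by have := le_lt_trans (le_trans xu ul) lx; rewrite ltxx.
have supS : has_sup S by split; [exists m | exists l].
exists (sup S) => e e0; have [x Sx ex] := sup_adherent e0 supS.
have [notS|] := in_ultra_setVsetC [set n | sup S + e <= u n] UU.
  by have := sup_upper_bound supS notS; rewrite leNgt ltrDl e0.
move=> /(filterI Sx); apply: filterS => n /= [xu /negP].
by rewrite -ltNge ltr_norml => ue; apply/andP; split; lra.
Qed.

Section nonprincipal.
Hypothesis nonprincipal : forall n, ~ U [set n].

Lemma ultra_ge k : U [set n | (k <= n)%N].
Proof.
elim: k => [|k IH]; first exact: filterS filterT.
have [//|] := in_ultra_setVsetC [set n | (k.+1 <= n)%N] UU.
move=> /(filterI IH) Uk; exfalso; apply: (nonprincipal k); apply: filterS Uk.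
by move=> n /= [kn /negP]; rewrite -ltnNge ltnS => nk; apply/eqP; rewrite eqn_leq nk.
Qed.

(* [s n] is the largest level [k <= n] at which [b n k] is already
   [1/(k+1)]-close to [a k]. *)
Lemma ulim_diagonal {b : nat -> R -> R} {a : R -> R} {m} :
  (forall r, ulim_is U (b ^~ r) (a r)) -> {homo a : r s /~ r <= s} ->
  (forall r, m <= a r) ->
  exists s : nat -> R, (forall M, U [set n | M < s n]) /\
    ulim_is U (fun n => b n (s n)) (inf (range a)).
Proof.
move=> ba a_anti am.
have infa : has_inf (range a) by split; [exists (a 0), 0 | exists m => _ [r _ <-]].
have inf_le r : inf (range a) <= a r by apply: (ge_inf infa.2); exists r.
pose A k := [set n | (k <= n)%N /\ `|b n k%:R - a k%:R| < k.+1%:R^-1].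
have UA k : U (A k) by apply: filterI (ultra_ge k) (ba _ _ _); rewrite invr_gt0.
have [kn knP] := diagonal_index A (fun k n (Akn : A k n) => proj1 Akn).
exists (fun n => (kn n)%:R); split.
  move=> M; have [K MK] := exists_nat_gt M.
  apply: filterS (UA K) => n /(knP K)[Kk _] /=.
  by apply: lt_le_trans MK _; rewrite ler_nat.
move=> e e0; have e2 : 0 < e / 2 by rewrite divr_gt0.
have [_ [r0 _ <-] ar0] := inf_adherent e2 infa.
have [K rK] := exists_nat_gt (Num.max r0 (e / 2)^-1).
have r0K : r0 <= K%:R by apply: le_trans (ltW rK); rewrite le_max lexx.
have eK : (e / 2)^-1 < K%:R by apply: le_lt_trans rK; rewrite le_max lexx orbT.
apply: filterS (UA K) => n /(knP K)[Kk [_]] /=.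
have ak := inf_le (kn n)%:R.
have ak_le : a (kn n)%:R <= a r0 by apply/a_anti/(le_trans r0K); rewrite ler_nat.
have : (kn n).+1%:R^-1 < e / 2.
  rewrite -[e / 2]invrK ltf_pV2 ?posrE ?ltr0n ?invr_gt0 //.
  by apply: (lt_le_trans eK); rewrite ler_nat (leq_trans Kk).
move: (kn n).+1%:R^-1 (b n _) (a _) (a r0) (inf _) ak ak_le ar0 => w x y z i ? ? ? ?.
rewrite !ltr_norml => /andP[? ?]; apply/andP; split; lra.
Qed.

End nonprincipal.
End ultralimit.

Section truncation.
Context {R : realType}.
Implicit Types (f : R -> R) (q r s x : R).

Lemma cut_aboveE r f x : cut_above r f x = if r < `|f x| then f x else 0.
Proof.
rewrite /cut_above indicE; case: ifPn => [rf|/negP rf].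
  by rewrite mem_set ?mulr1.
by rewrite memNset ?mulr0.
Qed.

Lemma measurable_cut_above r f : measurable_fun setT f ->
  measurable_fun setT (cut_above r f).
Proof.
move=> mf; apply: measurable_funM => //; apply/measurable_indicP.
have -> : [set y | r < `|f y|] = setT `&` f @^-1` ((@Num.norm _ R) @^-1` `]r, +oo[).
  by rewrite setTI; apply/seteqP; split => y; rewrite /preimage /= in_itv /= andbT.
have mB : measurable ((@Num.norm _ R) @^-1` `]r, +oo[).
  rewrite -[X in measurable X]setTI.
  by apply: normr_measurable => //; exact: measurable_itv.
exact: mf measurableT _ mB.
Qed.

Lemma norm_cut_above_le r f x : `|cut_above r f x| <= `|f x|.
Proof. by rewrite cut_aboveE; case: ifP; rewrite ?normr0. Qed.

Lemma norm_cut_aboveB_le r s f x :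
  `|cut_above r f x - cut_above s f x| <= `|f x|.
Proof.
by rewrite !cut_aboveE; case: ifP => _; case: ifP => _;
  rewrite ?subrr ?subr0 ?sub0r ?normrN ?normr0.
Qed.

(* Between the levels [r <= s], [cut_above r f - cut_above s f] and
   [cut_above s f] have disjoint supports. *)
Lemma powR_norm_cut_above_split q r s f x : 0 < q -> r <= s ->
  `|cut_above r f x| `^ q =
  `|cut_above r f x - cut_above s f x| `^ q + `|cut_above s f x| `^ q.
Proof.
move=> q0 rs; rewrite !cut_aboveE.
case: ltP => fr; case: ltP => fs; rewrite ?subrr ?subr0 normr0 powR0 ?gt_eqF //.
- by rewrite add0r.
- by rewrite addr0.
- by have := le_lt_trans rs fs; rewrite ltNge fr.
- by rewrite addr0.
Qed.

End truncation.

Section power_integral.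
Context {R : realType}.
Local Notation mu := (@mu01 R).
Implicit Types (f g : R -> R) (p q r s : R).

Definition Ipow q f : \bar R := (\int[mu]_x (`|f x| `^ q)%:E)%E.
Definition ipow q f : R := fine (Ipow q f).

Lemma mu01_setT : mu setT = 1%E.
Proof.
rewrite /mu01 /mrestr setTI lebesgue_measure_itv /=.
by rewrite lte_fin ltr01 sube0.
Qed.

Lemma pnormE q f : pnorm q f = (Ipow q f `^ q^-1)%E.
Proof. by rewrite /pnorm unlock. Qed.

Lemma measurable_powR_norm q f : measurable_fun setT f ->
  measurable_fun setT (fun x => (`|f x| `^ q)%:E : \bar R).
Proof.
move=> mf; apply/measurable_EFinP; apply: (measurableT_comp (measurable_powR q)).
exact: (@measurableT_comp _ _ _ _ _ _ (@Num.norm _ R)).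
Qed.

Lemma Ipow_ge0 q f : (0 <= Ipow q f)%E.
Proof. by apply: integral_ge0 => x _; rewrite lee_fin powR_ge0. Qed.

Lemma ipow_ge0 q f : 0 <= ipow q f.
Proof. exact/fine_ge0/Ipow_ge0. Qed.

Lemma Ipow_fin_num {q f} : (Ipow q f < +oo)%E -> Ipow q f \is a fin_num.
Proof. by rewrite ge0_fin_numE // Ipow_ge0. Qed.

Lemma IpowE {q f} : (Ipow q f < +oo)%E -> Ipow q f = (ipow q f)%:E.
Proof. by move=> /Ipow_fin_num/fineK. Qed.

Lemma Ipow_lty {q f} : 0 < q -> (pnorm q f < +oo)%E -> (Ipow q f < +oo)%E.
Proof.
move=> q0; have -> : Ipow q f = (pnorm q f `^ q)%E.
  by rewrite /pnorm powR_Lnorm ?gt_eqF.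
have : (0 <= pnorm q f)%E by exact: Lnorm_ge0.
by case: (pnorm q f) => // x _ _; rewrite poweR_EFin ltry.
Qed.

Lemma pnorm_ipow {q f} : (Ipow q f < +oo)%E -> pnorm q f = (ipow q f `^ q^-1)%:E.
Proof. by move=> f_lty; rewrite pnormE IpowE // poweR_EFin. Qed.

Lemma fine_pnorm {q f} : (Ipow q f < +oo)%E -> fine (pnorm q f) = ipow q f `^ q^-1.
Proof. by move/pnorm_ipow ->. Qed.

Lemma Ipow_subC q f g : Ipow q (f \- g)%R = Ipow q (g \- f)%R.
Proof. by apply: eq_integral => x _; rewrite distrC. Qed.

Lemma ipow_subC q f g : ipow q (f \- g)%R = ipow q (g \- f)%R.
Proof. by rewrite /ipow Ipow_subC. Qed.

Lemma le_Ipow {q f g} : measurable_fun setT f -> measurable_fun setT g -> 0 <= q ->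
  (forall x, `|f x| <= `|g x|) -> (Ipow q f <= Ipow q g)%E.
Proof.
move=> mf mg q0 fg; apply: (ge0_le_integral _ measurableT).
- by move=> x _; rewrite lee_fin powR_ge0.
- exact: measurable_powR_norm.
- exact: measurable_powR_norm.
- by move=> x _; rewrite lee_fin ge0_ler_powR.
Qed.

Lemma Ipow_cut_above_split {q r s f} : measurable_fun setT f -> 0 < q -> r <= s ->
  Ipow q (cut_above r f) =
  (Ipow q (cut_above r f \- cut_above s f)%R + Ipow q (cut_above s f))%E.
Proof.
move=> mf q0 rs; rewrite /Ipow -ge0_integralD //.
- apply: eq_integral => x _.
  by rewrite (powR_norm_cut_above_split _ _ _ _ _ q0 rs) EFinD.
- apply: measurable_powR_norm.
  by apply: measurable_funB; exact: measurable_cut_above.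
- by apply: measurable_powR_norm; exact: measurable_cut_above.
Qed.

(* [L^p] embeds in [L^2] since [|y|^2 <= |y|^p + 1] and [mu] is a probability. *)
Lemma Ipow2_lty {p f} : 2 <= p -> measurable_fun setT f ->
  (Ipow p f < +oo)%E -> (Ipow 2 f < +oo)%E.
Proof.
move=> p2 mf f_lty; apply: (@le_lt_trans _ _ (Ipow p f + 1)%E); last first.
  by rewrite IpowE // -EFinD ltry.
have -> : 1%E = (\int[mu]_x (cst 1%E x))%E.
  by rewrite integral_cst // mul1e; symmetry; exact: mu01_setT.
rewrite /Ipow -ge0_integralD //; last exact: measurable_powR_norm.
apply: (ge0_le_integral _ measurableT).
- by move=> x _; rewrite lee_fin powR_ge0.
- exact: measurable_powR_norm.
- by apply: emeasurable_funD => //; exact: measurable_powR_norm.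
move=> x _; rewrite /= -EFinD lee_fin.
have [f1|/ltW f1] := leP `|f x| 1.
  apply: (@le_trans _ _ 1); last by rewrite lerDr powR_ge0.
  have := @ge0_ler_powR _ 2 ltac:(lra) `|f x| 1.
  by rewrite powR1; apply; rewrite ?nnegrE.
apply: (@le_trans _ _ (`|f x| `^ p)); last by rewrite lerDl.
by rewrite ler_powR.
Qed.

Lemma powR_split2 y p : p != 0 -> y `^ p = y `^ 2 * y `^ (p - 2).
Proof. by move=> p0; rewrite -powRD addrC subrK // (negPf p0). Qed.

(* Chebyshev: [|f| > s] forces [s^(p-2) |f|^2 <= |f|^p]. *)
Lemma Ipow2_cut_above_le {p s f} : 2 < p -> 0 < s -> measurable_fun setT f ->
  ((s `^ (p - 2))%:E * Ipow 2 (cut_above s f) <= Ipow p f)%E.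
Proof.
move=> p2 s0 mf; have p0 : p != 0 by rewrite gt_eqF // (lt_trans _ p2).
have mc := measurable_cut_above s f mf.
have cut2_ge0 x : setT x -> (0 <= (`|cut_above s f x| `^ 2)%:E)%E.
  by rewrite lee_fin powR_ge0.
rewrite /Ipow -(ge0_integralZl_EFin mu measurableT cut2_ge0) ?powR_ge0 //; last first.
  exact: measurable_powR_norm.
apply: (ge0_le_integral _ measurableT).
- by move=> x _; rewrite lee_fin mulr_ge0 ?powR_ge0.
- by apply: measurable_funeM; exact: measurable_powR_norm.
- exact: measurable_powR_norm.
move=> x _; rewrite lee_fin cut_aboveE; case: ifPn => [/ltW sf|_].
  rewrite [leRHS](powR_split2 _ _ p0) mulrC ler_wpM2l ?powR_ge0 //.
  by apply: ge0_ler_powR; rewrite ?nnegrE ?subr_ge0 ?(ltW s0) ?(ltW p2).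
by rewrite normr0 powR0 // mulr0 powR_ge0.
Qed.

(* Below the level [r], [|f|^p <= max(r,1)^(p-2) |f|^2]. *)
Lemma Ipow_cut_aboveB_le p r f : 2 < p -> measurable_fun setT f ->
  (Ipow p (cut_above r f \- f)%R <= ((Num.max r 1) `^ (p - 2))%:E * Ipow 2 f)%E.
Proof.
move=> p2 mf; have p0 : p != 0 by rewrite gt_eqF // (lt_trans _ p2).
have f2_ge0 x : setT x -> (0 <= (`|f x| `^ 2)%:E)%E.
  by rewrite lee_fin powR_ge0.
rewrite /Ipow -(ge0_integralZl_EFin mu measurableT f2_ge0) ?powR_ge0 //; last first.
  exact: measurable_powR_norm.
apply: (ge0_le_integral _ measurableT).
- by move=> x _; rewrite lee_fin powR_ge0.
- apply: measurable_powR_norm.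
  by apply: measurable_funB => //; exact: measurable_cut_above.
- by apply: measurable_funeM; exact: measurable_powR_norm.
move=> x _; rewrite /= lee_fin cut_aboveE; case: ifPn => [_|].
  by rewrite subrr normr0 powR0 ?mulr_ge0 ?powR_ge0.
rewrite -leNgt sub0r normrN (powR_split2 _ _ p0) // => fr.
rewrite [leLHS]mulrC ler_wpM2r ?powR_ge0 //; apply: ge0_ler_powR.
- by rewrite subr_ge0 ltW.
- by rewrite nnegrE.
- by rewrite nnegrE le_max ler01 orbT.
- by rewrite le_max fr.
Qed.

End power_integral.

Section Lp_truncation.
Context {R : realType} {p : R} {f : R -> R}.
Hypotheses (p_gt0 : 0 < p) (mf : measurable_fun setT f)
  (f_lty : (Ipow p f < +oo)%E).
Implicit Types r s : R.

Lemma Ipow_cut_above_lty r : (Ipow p (cut_above r f) < +oo)%E.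
Proof.
apply: le_lt_trans f_lty.
exact: le_Ipow (measurable_cut_above r f mf) mf (ltW p_gt0) (norm_cut_above_le r f).
Qed.

Lemma Ipow_cut_aboveB_lty r s :
  (Ipow p (cut_above r f \- cut_above s f)%R < +oo)%E.
Proof.
apply: le_lt_trans f_lty; apply: le_Ipow _ mf (ltW p_gt0) (norm_cut_aboveB_le r s f).
by apply: measurable_funB; exact: measurable_cut_above.
Qed.

Lemma ipow_cut_above_le r : ipow p (cut_above r f) <= ipow p f.
Proof.
apply: fine_le; rewrite ?Ipow_fin_num ?Ipow_cut_above_lty //.
exact: le_Ipow (measurable_cut_above r f mf) mf (ltW p_gt0) (norm_cut_above_le r f).
Qed.

Lemma ipow_cut_aboveB r s : r <= s ->
  ipow p (cut_above r f \- cut_above s f)%R =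
  ipow p (cut_above r f) - ipow p (cut_above s f).
Proof.
move=> rs; rewrite {2}/ipow (Ipow_cut_above_split mf p_gt0 rs).
by rewrite fineD ?Ipow_fin_num ?Ipow_cut_above_lty ?Ipow_cut_aboveB_lty // addrK.
Qed.

Lemma ipow_cut_above_nonincreasing :
  {homo (fun r => ipow p (cut_above r f)) : r s /~ r <= s}.
Proof. by move=> r s /ipow_cut_aboveB; rewrite -subr_ge0 => <-; exact: ipow_ge0. Qed.

Lemma fine_pnorm_cut_aboveB r s :
  fine (pnorm p (cut_above r f \- cut_above s f)) =
  `|ipow p (cut_above r f) - ipow p (cut_above s f)| `^ p^-1.
Proof.
rewrite fine_pnorm ?Ipow_cut_aboveB_lty //; congr (_ `^ _).
wlog rs : r s / r <= s.
  move=> wlog_rs; have [/wlog_rs//|/ltW sr] := leP r s.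
  by rewrite (ipow_subC p (cut_above r f)) (wlog_rs s r sr); exact: distrC.
by rewrite ipow_cut_aboveB // ger0_norm // subr_ge0 ipow_cut_above_nonincreasing.
Qed.

End Lp_truncation.

Lemma powR_dist_inf_cvg {R : realType} {a : R -> R} {m q : R} : 0 < q ->
  {homo a : r s /~ r <= s} -> (forall r, m <= a r) ->
  `|a r - inf (range a)| `^ q @[r --> +oo] --> 0.
Proof.
move=> q0 a_anti am.
have infa : has_inf (range a) by split; [exists (a 0), 0 | exists m => _ [r _ <-]].
apply/cvgrPdist_lt => e e0.
have [_ [r0 _ <-] ar0] := inf_adherent (powR_gt0 q^-1 e0) infa.
exists r0; split=> [|r r0r]; first exact: num_real.
rewrite sub0r normrN ger0_norm ?powR_ge0 //.
rewrite -[X in _ < X](powRVK (ltW e0) (lt0r_neq0 q0)).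
apply: gt0_ltr_powR; rewrite ?nnegrE ?powR_ge0 //.
have := ge_inf infa.2 (ex_intro2 _ _ r I erefl).
have := a_anti _ _ (ltW r0r).
move: (a r) (a r0) (inf _) ar0 => x y i *.
by rewrite ger0_norm; lra.
Qed.

Section ultrapower_truncation.
Context {R : realType} {p : R} {U : set_system nat} (UU : UltraFilter U).
Hypothesis p_gt2 : 2 < p.

Let p_gt0 : 0 < p. Proof. by rewrite (lt_trans _ p_gt2). Qed.

Lemma Lp_bdd_seqP {F : nat -> R -> R} : Lp_bdd_seq p F ->
  [/\ forall n, measurable_fun setT (F n), forall n, (Ipow p (F n) < +oo)%E
    & exists B, forall n, ipow p (F n) <= B].
Proof.
move=> [hF [C hC]].
have F_lty n : (Ipow p (F n) < +oo)%E by apply: Ipow_lty p_gt0 (hF n).2.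
split=> [n|//|]; first exact: (hF n).1.
exists (C `^ p) => n; have := hC n; rewrite pnorm_ipow // lee_fin => FC.
rewrite -(powRVK (ipow_ge0 p (F n)) (lt0r_neq0 p_gt0)).
apply: ge0_ler_powR; rewrite ?nnegrE ?powR_ge0 ?(ltW p_gt0) //.
exact: le_trans (powR_ge0 _ _) FC.
Qed.

Lemma Lp_bdd_seq_cut_above (F : nat -> R -> R) (s : nat -> R) :
  Lp_bdd_seq p F -> Lp_bdd_seq p (fun n => cut_above (s n) (F n)).
Proof.
move=> hF; have [mF F_lty _] := Lp_bdd_seqP hF.
have cut_lty n := Ipow_cut_above_lty p_gt0 (mF n) (F_lty n) (s n).
split=> [n|]; first by split; [exact: measurable_cut_above|rewrite pnorm_ipow ?ltry].
have [_ [C hC]] := hF; exists C => n; apply: le_trans (hC n).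
rewrite (pnorm_ipow (cut_lty n)) (pnorm_ipow (F_lty n)) lee_fin.
apply: ge0_ler_powR.
- by rewrite invr_ge0 ltW.
- exact: ipow_ge0.
- exact: ipow_ge0.
- exact: ipow_cut_above_le p_gt0 (mF n) (F_lty n) (s n).
Qed.

Lemma inM_cut_above (F : nat -> R -> R) (s : nat -> R) :
  Lp_bdd_seq p F -> (forall M, U [set n | M < s n]) ->
  inM U (fun n => cut_above (s n) (F n)).
Proof.
move=> hF s_oo; have [mF F_lty [B FB]] := Lp_bdd_seqP hF.
have p2_neq0 : p - 2 != 0 by rewrite subr_eq0 gt_eqF.
move=> e e0; have ee0 : 0 < e * e by rewrite mulr_gt0.
apply: filterS (s_oo ((B / (e * e)) `^ (p - 2)^-1)) => n /= Bs.
have B0 : 0 <= B := le_trans (ipow_ge0 _ _) (FB n).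
have s0 : 0 < s n := le_lt_trans (powR_ge0 _ _) Bs.
have cut_lty := Ipow_cut_above_lty p_gt0 (mF n) (F_lty n) (s n).
have cut2_lty := Ipow2_lty (ltW p_gt2) (measurable_cut_above (s n) _ (mF n)) cut_lty.
have := Ipow2_cut_above_le p_gt2 s0 (mF n).
rewrite (IpowE cut2_lty) (IpowE (F_lty n)) -EFinM lee_fin => cheb.
have cut2_lt : ipow 2 (cut_above (s n) (F n)) < e * e.
  rewrite -(ltr_pM2l (powR_gt0 (p - 2) s0)).
  apply: le_lt_trans (le_trans cheb (FB n)) _.
  rewrite -(ltr_pdivrMr _ _ ee0).
  rewrite -[X in X < _](powRVK _ p2_neq0) ?divr_ge0 ?(ltW ee0) //.
  by apply: gt0_ltr_powR; rewrite ?nnegrE ?powR_ge0 ?subr_gt0 ?(ltW s0).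
rewrite subr0 ger0_norm ?fine_ge0 ?Lnorm_ge0 // fine_pnorm //.
have -> : e = (e * e) `^ 2^-1.
  by rewrite powR12_sqrt ?(ltW ee0) // -expr2 sqrtr_sqr ger0_norm // ltW.
by apply: gt0_ltr_powR; rewrite ?nnegrE ?ipow_ge0 ?(ltW ee0) ?invr_gt0.
Qed.

Lemma Rproj_is_cut_above {F : nat -> R -> R} {a : R -> R} {t : nat -> R} :
  Lp_bdd_seq p F ->
  (forall r, ulim_is U (fun n => ipow p (cut_above r (F n))) (a r)) ->
  {homo a : r r' /~ r <= r'} -> (forall r, 0 <= a r) ->
  ulim_is U (fun n => ipow p (cut_above (t n) (F n))) (inf (range a)) ->
  Rproj_is p U F (fun n => cut_above (t n) (F n)).
Proof.
move=> hF ha a_anti a_ge0 ht; have [mF F_lty _] := Lp_bdd_seqP hF.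
have pV_gt0 : 0 < p^-1 by rewrite invr_gt0.
have p1 : 0 < p^-1 <= 1.
  by rewrite pV_gt0 invf_le1 // ltW // (lt_trans _ p_gt2) ?ltr1n.
exists (fun r => `|a r - inf (range a)| `^ p^-1); split.
  move=> r; apply: (eq_ulim UU).
    by move=> n; rewrite (fine_pnorm_cut_aboveB p_gt0 (mF n) (F_lty n)).
  apply: (ulim_powR UU) p1 (ulim_norm UU (ulimB UU (ha r) ht)) => [n|].
  - exact: normr_ge0.
  - exact: normr_ge0.
exact: powR_dist_inf_cvg pV_gt0 a_anti a_ge0.
Qed.

Lemma Rproj_exists_inM (F : nat -> R -> R) : (forall n, ~ U [set n]) ->
  Lp_bdd_seq p F ->
  exists G : nat -> R -> R, Lp_bdd_seq p G /\ Rproj_is p U F G /\ inM U G.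
Proof.
move=> nonprincipal hF; have [mF F_lty [B FB]] := Lp_bdd_seqP hF.
pose b n r := ipow p (cut_above r (F n)).
have b_bound r n : 0 <= b n r <= B.
  by rewrite ipow_ge0 (le_trans (ipow_cut_above_le p_gt0 (mF n) (F_lty n) r)).
have [a ha] := choice (fun r => ulim_bounded UU (b_bound r)).
have a_ge0 r : 0 <= a r.
  by apply: (ler_ulim UU) _ (ulim_cst UU 0) (ha r) => n; case/andP: (b_bound r n).
have a_anti : {homo a : r r' /~ r <= r'}.
  move=> r r' rr'; apply: (ler_ulim UU) _ (ha r) (ha r') => n.
  exact: ipow_cut_above_nonincreasing p_gt0 (mF n) (F_lty n) _ _ rr'.
have [t [t_oo ht]] := ulim_diagonal UU nonprincipal ha a_anti a_ge0.
exists (fun n => cut_above (t n) (F n)); split; first exact: Lp_bdd_seq_cut_above.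
split; last exact: inM_cut_above.
exact: Rproj_is_cut_above ha a_anti a_ge0 ht.
Qed.

Lemma Rproj_is_id_inM (F : nat -> R -> R) :
  Lp_bdd_seq p F -> inM U F -> Rproj_is p U F F.
Proof.
move=> hF hM; have [mF F_lty _] := Lp_bdd_seqP hF.
exists (fun=> 0); split=> [r|]; last exact: cvg_cst.
set c := (Num.max r 1 `^ (p - 2)) `^ p^-1.
have q1 : 0 < 2 / p <= 1 by rewrite divr_gt0 //= ler_pdivrMr // mul1r ltW.
apply: (ulim0_le UU (v := fun n => c * fine (pnorm 2 (F n)) `^ (2 / p))); last first.
  have F2_ge0 n : 0 <= fine (pnorm 2 (F n)) by exact/fine_ge0/Lnorm_ge0.
  have := ulimZ UU c (ulim_powR UU F2_ge0 (lexx 0) q1 hM).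
  by rewrite powR0 ?mulr0 //; apply: lt0r_neq0; case/andP: q1.
move=> n; have F2_lty := Ipow2_lty (ltW p_gt2) (mF n) (F_lty n).
have cutB := Ipow_cut_aboveB_le p r (F n) p_gt2 (mF n).
have cutB_lty : (Ipow p (cut_above r (F n) \- F n)%R < +oo)%E.
  by apply: le_lt_trans cutB _; rewrite (IpowE F2_lty) -EFinM ltry.
rewrite (IpowE cutB_lty) (IpowE F2_lty) -EFinM lee_fin in cutB.
rewrite !fine_pnorm // powR_ge0 /= -powRrM mulrA mulVf ?pnatr_eq0 // mul1r.
rewrite /c -powRM ?powR_ge0 ?ipow_ge0 //.
apply: ge0_ler_powR => //; rewrite ?nnegrE.
- by rewrite invr_ge0 ltW.
- exact: ipow_ge0.
- by rewrite mulr_ge0 ?powR_ge0 ?ipow_ge0.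
Qed.

End ultrapower_truncation.

Theorem lemma5p2 (R : realType) (p : R) (U : set_system nat) :
  2 < p -> UltraFilter U -> (forall n : nat, ~ U [set n]) ->
  (forall F : nat -> R -> R, Lp_bdd_seq p F ->
     exists G : nat -> R -> R, Lp_bdd_seq p G /\ Rproj_is p U F G /\ inM U G) /\
  (forall F : nat -> R -> R, Lp_bdd_seq p F -> inM U F -> Rproj_is p U F F).
Proof.
move=> p_gt2 UU nonprincipal; split=> F hF.
  exact: Rproj_exists_inM UU p_gt2 F nonprincipal hF.
exact: Rproj_is_id_inM UU p_gt2 F hF.
Qed.
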